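(* Let $k\ge 2$. Every $k$-tree $G$ satisfies $\vec{\chi}(G)\le k$.
   Context: Digraphs have no loops and no parallel arcs, but may contain digons. $\vec{\chi}(G)$ is the dichromatic number (minimum number of colours in a colouring of $V(G)$ with no monochromatic directed cycle). $\Delta_{max}(G)=\max_v\max(d^+(v),d^-(v))$. $\mathcal B_1$ is the set of directed cycles (including digons), $\mathcal B_2$ the set of symmetric cycles of odd length (each edge of an odd undirected cycle replaced by a digon), and for $j\ge 3$, $\mathcal B_j=\{\overleftrightarrow K_{j+1}\}$ (symmetric complete graph on $j+1$ vertices). A digraph $G$ is a direct composition of $G_1,G_2$ on $v_1\in V(G_1)$, $v_2\in V(G_2)$ if obtained from their disjoint union by adding exactly one arc between $v_1$ and $v_2$. $G$ is a cyclic composition of $G_1,\dots,G_\ell$ ($\ell\ge2$) on $v_i\in V(G_i)$ if obtained from their disjoint union by adding arcs $v_iv_{i+1}$ ($1\le i\le \ell-1$) and $v_\ell v_1$. A $k$-tree is a digraph $G$ with $\Delta_{max}(G)\le k$ that can be built by: every member of $\mathcal B_{k-1}$ is a $k$-tree; a direct or cyclic composition of $k$-trees is a $k$-tree. *)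

From Stdlib Require Import ClassicalEpsilon.
From mathcomp Require Import all_boot.
Set Implicit Arguments.
Unset Strict Implicit.
Unset Printing Implicit Defensive.

(** Digraphs: a finite vertex type with an arc relation (no parallel arcs
    automatically; digons allowed).  Looplessness is a separate condition. *)

Section Basics.
Variable T : finType.
Implicit Types (A : rel T).

Definition loopless A := forall x, ~~ A x x.

Definition outdeg A v := #|[pred y | A v y]|.
Definition indeg A v := #|[pred y | A y v]|.
Definition Delta_max A := \max_(v : T) maxn (outdeg A v) (indeg A v).

Definition dicycle A (s : seq T) := [/\ s != [::], uniq s & cycle A s].

Definition acyclic_colouring A m (c : T -> 'I_m) :=
  forall s, dicycle A s -> ~ {in s &, forall x y, c x = c y}.

Definition colourable A m := exists c : T -> 'I_m, acyclic_colouring A c.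

Definition colourableb A m : bool :=
  if excluded_middle_informative (colourable A m) then true else false.

Lemma colourable_card A : loopless A -> colourableb A #|T|.
Proof.
move=> Hl; rewrite /colourableb; case: excluded_middle_informative => // []; case.
exists (@enum_rank T) => s [ne u cy] mono.
case: s ne u cy mono => [//|x [|y s]] _ u cy mono.
  by move: cy; rewrite /= andbT (negbTE (Hl x)).
have xy : x = y.
  by apply: enum_rank_inj; apply: mono; rewrite !inE ?eqxx ?orbT.
by move: u; rewrite /= inE xy eqxx.
Qed.

End Basics.

Record digraph := Digraph {
  vert : finType;
  darc : rel vert;
  arc_loopless : loopless darc
}.
Arguments darc : clear implicits.

Lemma digraph_colourable (G : digraph) : exists m, colourableb (darc G) m.
Proof. by exists #|vert G|; apply: colourable_card; exact: arc_loopless. Qed.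

Definition dichromatic (G : digraph) : nat := ex_minn (digraph_colourable G).

Definition isomorphic (T1 T2 : finType) (A1 : rel T1) (A2 : rel T2) :=
  exists f : T1 -> T2, bijective f /\ forall x y, A2 (f x) (f y) = A1 x y.

(** Representatives on 'I_n of the members of B_j. *)
Definition succ_mod n (i j : 'I_n) := val j == (val i).+1 %% n.
(* directed cycle of length n (n >= 2; n = 2 is the digon) *)
Definition dicycle_graph n : rel 'I_n := fun i j => succ_mod i j.
Definition symcycle_graph n : rel 'I_n := fun i j => succ_mod i j || succ_mod j i.
Definition symcomplete_graph n : rel 'I_n := fun i j => i != j.

Arguments dicycle_graph : clear implicits.
Arguments symcycle_graph : clear implicits.
Arguments symcomplete_graph : clear implicits.

Definition in_B (j : nat) (T : finType) (A : rel T) : Prop :=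
  if j == 1 then exists n, 2 <= n /\ isomorphic (dicycle_graph n) A
  else if j == 2 then exists n, [/\ 3 <= n, odd n & isomorphic (symcycle_graph n) A]
  else 3 <= j /\ isomorphic (symcomplete_graph j.+1) A.

Definition direct_comp (T1 T2 : finType) (A1 : rel T1) (A2 : rel T2)
    (v1 : T1) (v2 : T2) (b : bool) : rel (T1 + T2)%type :=
  fun x y =>
    match x, y with
    | inl a, inl a' => A1 a a'
    | inr a, inr a' => A2 a a'
    | inl a, inr a' => b && (a == v1) && (a' == v2)
    | inr a, inl a' => ~~ b && (a == v2) && (a' == v1)
    end.

Definition cyclic_comp (l : nat) (T : 'I_l -> finType) (A : forall i, rel (T i))
    (v : forall i, T i) : rel {i : 'I_l & T i} :=
  fun x y =>
    ((tag x == tag y) && A (tag x) (tagged x) (tagged_as x y))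
    || [exists i : 'I_l, exists j : 'I_l,
          [&& succ_mod i j, x == Tagged T (v i) & y == Tagged T (v j)]].

Inductive ktree (k : nat) : forall (T : finType), rel T -> Prop :=
  | ktree_base (T : finType) (A : rel T) :
      in_B k.-1 A -> Delta_max A <= k -> ktree k A
  | ktree_direct (T1 T2 : finType) (A1 : rel T1) (A2 : rel T2) v1 v2 b :
      ktree k A1 -> ktree k A2 ->
      Delta_max (direct_comp A1 A2 v1 v2 b) <= k ->
      ktree k (direct_comp A1 A2 v1 v2 b)
  | ktree_cyclic (l : nat) (T : 'I_l -> finType) (A : forall i, rel (T i))
      (v : forall i, T i) :
      2 <= l -> (forall i, ktree k (A i)) ->
      Delta_max (cyclic_comp A v) <= k ->
      ktree k (cyclic_comp A v)
  | ktree_iso (T1 T2 : finType) (A1 : rel T1) (A2 : rel T2) :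
      ktree k A1 -> isomorphic A1 A2 -> ktree k A2.

From mathcomp Require Import all_boot zify fingroup perm.
From Stdlib Require Import ClassicalEpsilon.
Set Implicit Arguments.
Unset Strict Implicit.
Unset Printing Implicit Defensive.

(** The proof is by induction on the k-tree structure,
    showing that the class of digraphs admitting an acyclic m-colouring is
    closed under each construction:
    - isomorphism: acyclic colourings pull back along arc-preserving maps
      that are injective on the cycle at hand ([acyclic_pull]);
    - members of B_(k-1): a directed cycle is 2-colourable, an odd symmetric
      cycle 3-colourable and the symmetric K_k is k-colourable, all obtained
      from the criterion [rank_acyclic] (a colouring is acyclic when inside
      each colour class arcs strictly increase some rank function);
    - direct composition: the single connecting arc can only be crossed in one
      direction, so every directed cycle stays inside one part;
    - cyclic composition: a directed cycle that leaves a part must run through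
      every connecting vertex v_i; after permuting colours inside each part
      so that v_0 gets the last colour and every other v_i colour 0, such a
      cycle is not monochromatic, while cycles inside one part are handled
      as above. *)

Lemma acyclic_pull (T T1 : finType) (A : rel T) (A1 : rel T1) m
    (c1 : T1 -> 'I_m) (c : T -> 'I_m) (g : T -> T1) (s : seq T) :
  acyclic_colouring A1 c1 ->
  {in s &, injective g} -> {in s &, forall a b, A a b -> A1 (g a) (g b)} ->
  {in s, forall x, c1 (g x) = c x} ->
  dicycle A s -> ~ {in s &, forall x y, c x = c y}.
Proof.
move=> ac1 g_inj g_hom g_col [s_nil s_uniq s_cycle] mono.
have image_cycle : dicycle A1 (map g s).
  split; first by case: (s) s_nil.
    by rewrite map_inj_in_uniq.
  case: (s) s_cycle g_hom => [//|x p] /= path_s hom.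
  rewrite -map_rcons; apply: (homo_path_in hom) path_s.
  by apply/allP => z; rewrite inE mem_rcons inE orbA orbb.
apply: (ac1 _ image_cycle) => _ _ /mapP [x xs ->] /mapP [y ys ->].
by rewrite !g_col //; exact: mono.
Qed.

Lemma iso_colourable (T1 T2 : finType) (A1 : rel T1) (A2 : rel T2) m :
  isomorphic A1 A2 -> colourable A1 m -> colourable A2 m.
Proof.
move=> [f [[g fK gK] f_hom]] [c1 ac1].
exists (fun x => c1 (g x)) => s dc.
apply: (acyclic_pull (A := A2) (g := g) ac1) => //.
- by move=> a b _ _ gab; rewrite -(gK a) gab gK.
- by move=> a b _ _; rewrite -f_hom !gK.
Qed.

Lemma acyclic_recolour (T : finType) (A : rel T) m (c : T -> 'I_m)
    (h : 'I_m -> 'I_m) :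
  acyclic_colouring A c -> injective h -> acyclic_colouring A (h \o c).
Proof.
move=> ac h_inj s dc mono; apply: (ac s dc) => x y xs ys.
by apply: h_inj; exact: mono.
Qed.

Lemma rank_acyclic (T : finType) (A : rel T) m (c : T -> 'I_m) (f : T -> nat) :
  (forall x y, A x y -> c x = c y -> f x < f y) -> acyclic_colouring A c.
Proof.
move=> rank_up [|x p] [] // _ _ cyc mono.
have up : path (relpre f ltn) x (rcons p x).
  move: cyc => /= cyc; apply: (sub_in_path (P := [pred z | z \in x :: p]) _ _ cyc).
    move=> a b a_in b_in Aab.
    exact: rank_up Aab (mono a b a_in b_in).
  by apply/allP => z; rewrite inE mem_rcons inE orbA orbb.
have := allP (order_path_min (fun _ _ _ => @ltn_trans _ _ _) up) x.
by rewrite mem_rcons mem_head ltnn => /(_ isT).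
Qed.

Lemma proper_acyclic (T : finType) (A : rel T) m (c : T -> 'I_m) :
  (forall x y, A x y -> c x != c y) -> acyclic_colouring A c.
Proof.
move=> proper; apply: (rank_acyclic (f := fun _ => 0)) => x y Axy cxy.
by move: (proper x y Axy); rewrite cxy eqxx.
Qed.

Lemma path_exit (T : eqType) (e : rel T) (P : pred T) x p :
  path e x p -> P x -> ~~ all P p ->
  exists a b, [/\ a \in x :: p, b \in p, e a b, P a & ~~ P b].
Proof.
elim: p x => [//|y p IH] x /= /andP [exy path_p] Px.
case Py: (P y) => /= not_all; last by exists x, y; rewrite !mem_head Py.
have [a [b [a_in b_in eab Pa Pb]]] := IH y path_p Py not_all.
by exists a, b; split; rewrite // in_cons ?a_in ?b_in orbT.
Qed.

Lemma cycle_exit (T : finType) (A : rel T) (P : pred T) s x y :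
  dicycle A s -> x \in s -> y \in s -> P x -> ~~ P y ->
  exists a b, [/\ a \in s, b \in s, A a b, P a & ~~ P b].
Proof.
move=> [_ _ cyc] xs ys Px Py.
have [i p rot_s] := rot_to xs.
have mem_s z : (z \in s) = (z \in x :: p) by rewrite -(mem_rot i s) rot_s.
have path_x : path A x (rcons p x) by move: cyc; rewrite -(rot_cycle i) rot_s.
have not_all : ~~ all P (rcons p x).
  by apply/allPn; exists y; rewrite // mem_rcons -mem_s.
have [a [b [a_in b_in Aab Pa Pb]]] := path_exit path_x Px not_all.
rewrite mem_rcons in b_in; rewrite in_cons mem_rcons in_cons orbA orbb -in_cons in a_in.
by exists a, b; rewrite !mem_s.
Qed.

Lemma succ_modE n (i j : 'I_n) :
  succ_mod i j -> val j = if val i == n.-1 then 0 else (val i).+1.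
Proof.
rewrite /succ_mod => /eqP ->; have := ltn_ord i.
case: eqP => [-> lt_in | ne lt_in].
  by rewrite prednK ?modnn // (leq_ltn_trans _ lt_in).
rewrite modn_small // ltn_neqAle lt_in andbT.
by apply/eqP => /(congr1 predn); exact: ne.
Qed.

Lemma succ_mod_irr n (i : 'I_n) : 2 <= n -> ~~ succ_mod i i.
Proof. by move=> n2; apply/negP => /succ_modE; have := ltn_ord i; case: eqP; lia. Qed.

(** A directed cycle is 2-colourable: colour the last vertex 1 and the rest 0;
    inside colour 0 arcs increase the index. *)
Lemma dicycle_graph_col n : 2 <= n -> colourable (dicycle_graph n) 2.
Proof.
move=> n2; exists (fun i : 'I_n => if val i == n.-1 then ord_max else ord0 : 'I_2).
apply: (rank_acyclic (f := val)) => i j /succ_modE.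
case: eqP => [_ j_first | _ ->] //; rewrite j_first.
have /negbTE -> : 0 != n.-1 by rewrite eq_sym -lt0n -ltnS prednK // ltnW.
by move/(congr1 val).
Qed.

(** An odd symmetric cycle is properly 3-colourable: alternate colours 0, 1
    and give the last vertex colour 2. *)
Lemma symcycle_col n : 3 <= n -> odd n -> colourable (symcycle_graph n) 3.
Proof.
move=> n3 n_odd.
pose f (i : 'I_n) : nat := if val i == n.-1 then 2 else odd (val i).
have f_lt3 i : f i < 3 by rewrite /f; case: eqP => //; case: odd.
have f_next i j : succ_mod i j -> f i != f j.
  move=> /succ_modE ij_next; rewrite /f ij_next.
  case: (val i =P n.-1) => _; first by case: (0 =P n.-1) => //; lia.
  by case: ((val i).+1 =P n.-1) => _ /=; case: odd.
exists (fun i => inord (f i)); apply: proper_acyclic => i j.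
rewrite -(inj_eq val_inj) /= !inordK // => /orP [/f_next // | /f_next].
by rewrite eq_sym.
Qed.

Lemma symcomplete_col m : colourable (symcomplete_graph m) m.
Proof. by exists id; apply: proper_acyclic. Qed.

Lemma base_col k (T : finType) (A : rel T) :
  2 <= k -> in_B k.-1 A -> colourable A k.
Proof.
case: k => [|[|[|[|k]]]] //= _; rewrite /in_B /=.
- by move=> [n [n2 iso]]; exact: iso_colourable iso (dicycle_graph_col n2).
- by move=> [n [n3 n_odd iso]]; exact: iso_colourable iso (symcycle_col n3 n_odd).
- by move=> [_ iso]; exact: iso_colourable iso (symcomplete_col _).
Qed.

Definition is_left (T1 T2 : Type) (x : T1 + T2) : bool :=
  if x is inl _ then true else false.

(** A directed cycle of a direct composition lies inside one of the two
    parts: leaving the left part and coming back would need connecting arcs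
    in both directions. *)
Lemma direct_comp_cycle_side (T1 T2 : finType) (A1 : rel T1) (A2 : rel T2)
    v1 v2 b s :
  dicycle (direct_comp A1 A2 v1 v2 b) s ->
  all (@is_left T1 T2) s || all (fun x => ~~ is_left x) s.
Proof.
move=> dc; apply/norP => [[/allPn [y ys y_right] /allPn [x xs /negPn x_left]]].
have [a [a' [_ _ arc_lr a_left a'_right]]] := cycle_exit dc xs ys x_left y_right.
have [c [c' [_ _ arc_rl c_right c'_left]]] :=
  cycle_exit (P := fun z => ~~ is_left z) dc ys xs y_right (introT negPn x_left).
case: a a' arc_lr a_left a'_right => [a|//] [//|a'] /= /andP [/andP [b_true _] _] _ _.
case: c c' arc_rl c_right c'_left => [//|c] [c'|//] /= /andP [/andP [b_false _] _] _ _.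
by rewrite b_true in b_false.
Qed.

Lemma direct_col (T1 T2 : finType) (A1 : rel T1) (A2 : rel T2) v1 v2 b m :
  colourable A1 m -> colourable A2 m -> colourable (direct_comp A1 A2 v1 v2 b) m.
Proof.
move=> [c1 ac1] [c2 ac2].
exists (fun x => match x with inl a => c1 a | inr a => c2 a end) => s dc.
case/orP: (direct_comp_cycle_side dc) => [/allP all_left | /allP all_right].
- have left_in x : x \in s -> exists a, x = inl a.
    by move=> /all_left; case: x => // a _; exists a.
  apply: (acyclic_pull (A1 := A1)
            (g := fun x => if x is inl a then a else v1) ac1 _ _ _ dc).
  + by move=> x y /left_in [a ->] /left_in [a' ->] ->.
  + by move=> x y /left_in [a ->] /left_in [a' ->].
  + by move=> x /left_in [a ->].
- have right_in x : x \in s -> exists a, x = inr a.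
    by move=> /all_right; case: x => // a _; exists a.
  apply: (acyclic_pull (A1 := A2)
            (g := fun x => if x is inr a then a else v2) ac2 _ _ _ dc).
  + by move=> x y /right_in [a ->] /right_in [a' ->] ->.
  + by move=> x y /right_in [a ->] /right_in [a' ->].
  + by move=> x /right_in [a ->].
Qed.

Section CyclicComposition.
Variables (l : nat) (T : 'I_l -> finType) (A : forall i, rel (T i)).
Variable v : forall i, T i.
Hypothesis l_ge2 : 2 <= l.

Local Notation G := (cyclic_comp A v).
Local Notation conn i := (Tagged T (v i)).

Lemma in_part i (x : {i : 'I_l & T i}) :
  tag x = i -> exists a, x = Tagged T a /\ tagged_as (conn i) x = a.
Proof. by case: x => j a /= <-; exists a; rewrite tagged_asE. Qed.

(** Arcs of [G] inside part i are arcs of [A i]: connecting arcs join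
    distinct parts because [succ_mod] is irreflexive for l >= 2. *)
Lemma part_arc i (a b : T i) : G (Tagged T a) (Tagged T b) -> @A i a b.
Proof.
rewrite /cyclic_comp /= eqxx tagged_asE /=.
case/orP => [//|/existsP [i1 /existsP [j1 /and3P [i1j1 /eqP a_conn /eqP b_conn]]]].
move: (congr1 tag a_conn) (congr1 tag b_conn) i1j1 => /= <- <-.
by rewrite (negbTE (succ_mod_irr _ l_ge2)).
Qed.

Definition spans_parts (s : seq {i : 'I_l & T i}) : bool :=
  [forall i, has (fun y => tag y != i) s].

Lemma spanning_cycle_next s i :
  dicycle G s -> spans_parts s -> (exists2 x, x \in s & tag x = i) ->
  conn i \in s /\ exists2 j, succ_mod i j & conn j \in s.
Proof.
move=> dc /forallP /(_ i) /hasP [w ws w_out] [x xs x_in].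
have [a [b [a_in b_in arc a_i b_out]]] :=
  cycle_exit (P := fun z => tag z == i) dc xs ws (introT eqP x_in) w_out.
case/orP: arc => [/andP [/eqP same_tag _] | ].
  by move: b_out; rewrite -same_tag a_i.
case/existsP => i1 /existsP [j1 /and3P [i1j1 /eqP a_conn /eqP b_conn]].
move: a_i i1j1; rewrite a_conn => /eqP /= i1_i; subst i1 a b.
by split => //; exists j1.
Qed.

Lemma spanning_cycle_conn s :
  dicycle G s -> spans_parts s -> forall i, conn i \in s.
Proof.
move=> dc span; have [x0 x0s] : exists x0, x0 \in s.
  by case: dc; case: (s) => // x0 p _ _ _; exists x0; exact: mem_head.
have reach m : exists2 x, x \in s & val (tag x) = (val (tag x0) + m) %% l.
  elim: m => [|m [x xs x_tag]].
    by exists x0; rewrite // addn0 modn_small //; exact: ltn_ord.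
  have [_ [j ij j_in]] := spanning_cycle_next dc span (ex_intro2 _ _ x xs erefl).
  exists (conn j) => //=.
  by rewrite (eqP ij) x_tag addnS -addn1 modnDml addn1.
move=> i; have [x xs x_tag] := reach (l - val (tag x0) + val i).
apply: (proj1 (spanning_cycle_next dc span (ex_intro2 _ _ x xs _))).
apply: val_inj; rewrite x_tag addnA subnKC; last exact/ltnW/ltn_ord.
by rewrite modnDl modn_small ?ltn_ord.
Qed.

(** Acyclic colourings of the parts with at least two colours combine into
    one of [G]: permute the colours of each part so that v_0 gets the last
    colour and every other connecting vertex colour 0. *)
Lemma cyclic_col m :
  (forall i, colourable (@A i) m.+2) -> colourable G m.+2.
Proof.
move=> colourable_part.
have [cc acc] : exists cc : forall i, T i -> 'I_m.+2,
    forall i, acyclic_colouring (@A i) (cc i).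
  exists (fun i => sval (constructive_indefinite_description _ (colourable_part i))).
  by move=> i; case: constructive_indefinite_description.
pose target (i : 'I_l) : 'I_m.+2 := if val i == 0 then ord_max else ord0.
pose d i := tperm (cc i (v i)) (target i) \o cc i.
have d_acyclic i : acyclic_colouring (@A i) (d i).
  exact: acyclic_recolour (acc i) (@perm_inj _ _).
exists (fun x => d (tag x) (tagged x)) => s dc.
case: (boolP (spans_parts s)) => [span mono | ].
  pose i0 : 'I_l := Ordinal (ltnW l_ge2); pose i1 : 'I_l := Ordinal l_ge2.
  have := mono _ _ (spanning_cycle_conn dc span i0) (spanning_cycle_conn dc span i1).
  by rewrite /d /= !tpermL /target /= => /(congr1 val).
move=> /forallPn [i /hasPn single]; have in_i x : x \in s -> tag x = i.
  by move=> /single /negPn /eqP.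
apply: (acyclic_pull (A1 := @A i) (g := tagged_as (conn i)) (d_acyclic i) _ _ _ dc).
- by move=> x y /in_i /in_part [a [-> ->]] /in_i /in_part [b [-> ->]] ->.
- move=> x y /in_i /in_part [a [-> ->]] /in_i /in_part [b [-> ->]].
  exact: part_arc.
- by move=> x /in_i /in_part [a [-> ->]].
Qed.

End CyclicComposition.

Lemma ktree_colourable k (T : finType) (A : rel T) :
  2 <= k -> ktree k A -> colourable A k.
Proof.
case: k => [|[|k]] // _ tree; elim: tree => {T A}.
- by move=> T A in_base _; exact: base_col.
- by move=> T1 T2 A1 A2 v1 v2 b _ col1 _ col2 _; exact: direct_col.
- by move=> l T A v l_ge2 _ col_parts _; exact: cyclic_col.
- by move=> T1 T2 A1 A2 _ col1 iso; exact: iso_colourable iso col1.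
Qed.

Lemma dichromatic_le (G : digraph) m : colourable (darc G) m -> dichromatic G <= m.
Proof.
move=> col; rewrite /dichromatic; case: ex_minnP => n _; apply.
by rewrite /colourableb; case: excluded_middle_informative.
Qed.

Theorem mainTheorem6 (k : nat) (G : digraph) :
  2 <= k -> ktree k (darc G) -> dichromatic G <= k.
Proof. by move=> k_ge2 tree; apply: dichromatic_le; exact: ktree_colourable tree. Qed.
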